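(* Let $n\ge 2$ and let $Q\in\mathbb{R}^{n\times n}$ be an irreducible generator matrix of a continuous-time Markov chain ($q_{ij}\ge0$ for $i\ne j$, $q_{ii}=-\sum_{j\ne i}q_{ij}$). Let $\boldsymbol v$ be the positive eigenvector of $Q^\top$ for eigenvalue $0$ with $\boldsymbol 1_n^\top\boldsymbol v=1$, and let $L^*$ be the matrix with entries $L^*_{ii}=\sum_{j\ne i}q_{ji}\frac{v_j}{v_i}$ and $L^*_{ij}=-q_{ji}\frac{v_j}{v_i}$ for $i\ne j$. Let $B=\operatorname{diag}(\beta_i)$ with all $\beta_i>0$ and $D=\operatorname{diag}(\delta_i)$ with all $\delta_i\ge 0$ and at least one $\delta_i>0$. Let $A=(L^*+D)^{-1}B$ and define, for $\boldsymbol p\in\mathbb{R}^n$ with $\boldsymbol p\ge\boldsymbol 0$, \[ H(\boldsymbol p)=(I+A\operatorname{diag}(\boldsymbol p))^{-1}A\boldsymbol p . \] If $H$ has a fixed point $\boldsymbol p^*\gg\boldsymbol 0$, then it is the unique fixed point of $H$ with all entries strictly positive.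
   Context: For vectors, $\boldsymbol x\gg\boldsymbol y$ means $x_i>y_i$ for all $i$, and $\boldsymbol x\ge\boldsymbol y$ means $x_i\ge y_i$ for all $i$. *)

From mathcomp Require Import all_boot all_order all_algebra.
Set Implicit Arguments. Unset Strict Implicit. Unset Printing Implicit Defensive.
Import Order.TTheory GRing.Theory Num.Theory.
Local Open Scope ring_scope.

Section Defs.
Variables (R : realFieldType) (n : nat).

Definition generator_mx (Q : 'M[R]_n) : Prop :=
  (forall i j : 'I_n, i != j -> 0 <= Q i j) /\
  (forall i : 'I_n, Q i i = - \sum_(j < n | j != i) Q i j).

Definition irreducible_mx (Q : 'M[R]_n) : Prop :=
  forall i j : 'I_n, connect [rel a b | (a != b) && (0 < Q a b)] i j.

Definition Lstar (Q : 'M[R]_n) (v : 'cV[R]_n) : 'M[R]_n :=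
  \matrix_(i, j) if i == j then \sum_(k < n | k != i) Q k i * v k 0 / v i 0
                 else - (Q j i * v j 0 / v i 0).

Definition Hmap (A : 'M[R]_n) (p : 'cV[R]_n) : 'cV[R]_n :=
  invmx (1%:M + A *m diag_mx p^T) *m (A *m p).

Definition vpos (p : 'cV[R]_n) : Prop := forall i, 0 < p i 0.

End Defs.

From mathcomp Require Import all_boot all_order all_algebra.
From mathcomp Require Import ring lra.
Set Implicit Arguments. Unset Strict Implicit. Unset Printing Implicit Defensive.
Import Order.TTheory GRing.Theory Num.Theory.
Local Open Scope ring_scope.

(* Put M := L^* + D. A fixed point p >> 0 of H is exactly a positive solution
   of the logistic equation (M p)_i = beta_i p_i (1 - p_i). The matrix M has
   nonpositive off-diagonal entries, so for two positive solutions p, q the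
   ratio t = max_i p_i / q_i cannot exceed 1: at a maximising index the Z-sign
   pattern gives (M p - t M q)_i >= 0, whereas the logistic right-hand sides
   give beta_i t q_i^2 (1 - t) there. By symmetry p = q. Invertibility of M
   and of M + B diag(p), needed to turn H(p) = p into the logistic equation,
   follows from a maximum principle for Z-matrices with nonnegative row sums,
   using the irreducibility of Q for M itself. *)

Section ZMatrix.
Variables (R : realFieldType) (n : nat).

Lemma exists_argmax (f : 'I_n -> R) (i0 : 'I_n) :
  exists i, forall j, f j <= f i.
Proof.
by case: (@arg_maxP _ _ _ i0 predT f isT) => i _ fi; exists i => j; apply: fi.
Qed.

Lemma unitmx_of_kernel_max (K : 'M[R]_n) :
  (forall x : 'cV_n, K *m x = 0 ->
     forall i, (forall j, x j 0 <= x i 0) -> 0 < x i 0 -> False) ->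
  K \in unitmx.
Proof.
move=> no_max; rewrite unitmxE unitfE -det_tr.
apply/negP => /det0P [w w_neq0 wK]; set x := w^T.
have Kx : K *m x = 0 by rewrite /x -[K]trmxK -trmx_mul wK trmx0.
have [k xk_neq0] : exists k, x k 0 != 0.
  case: (pickP (fun k : 'I_n => x k 0 != 0)) => [k xk|x0]; first by exists k.
  exfalso; move/eqP: w_neq0; apply; apply/matrixP => a b.
  by move/negbFE/eqP: (x0 b); rewrite /x !mxE ord1.
move: xk_neq0; rewrite neq_lt => /orP [xk_lt0|xk_gt0].
- have K_Nx : K *m (- x) = 0 by rewrite mulmxN Kx oppr0.
  have [i max_i] := exists_argmax (fun j => (- x) j 0) k.
  apply: (no_max _ K_Nx i max_i); apply: lt_le_trans (max_i k).
  by rewrite mxE oppr_gt0.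
- have [i max_i] := exists_argmax (fun j => x j 0) k.
  exact: (no_max _ Kx i max_i (lt_le_trans xk_gt0 (max_i k))).
Qed.

Lemma rowsum_add_diag (K : 'M[R]_n) (d : 'rV[R]_n) i :
  \sum_j (K + diag_mx d) i j = \sum_j K i j + d 0 i.
Proof.
under eq_bigr => j _ do rewrite mxE.
rewrite big_split /=; congr (_ + _).
rewrite (bigD1 i) //= big1 ?addr0 => [|j ji]; first by rewrite mxE eqxx mulr1n.
by rewrite mxE eq_sym (negbTE ji) mulr0n.
Qed.

Lemma add_diag_offdiag (K : 'M[R]_n) (d : 'rV[R]_n) a b :
  a != b -> (K + diag_mx d) a b = K a b.
Proof. by move=> ab; rewrite !mxE (negbTE ab) mulr0n addr0. Qed.

Variable K : 'M[R]_n.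
Hypothesis K_offdiag : forall a b, a != b -> K a b <= 0.

(* (K x)_i = x_i * rowsum_i + \sum_j K_ij (x_j - x_i), and both terms are
   nonnegative at a positive maximum of x. *)
Lemma Zmx_kernel_max (x : 'cV[R]_n) i :
  (forall j, x j 0 <= x i 0) -> 0 < x i 0 -> (K *m x) i 0 = 0 ->
  0 <= \sum_j K i j ->
  \sum_j K i j = 0 /\ (forall j, K i j < 0 -> x j 0 = x i 0).
Proof.
move=> max_i xi_gt0 Kx_i rowsum_ge0.
have Kx_split : (K *m x) i 0 =
    x i 0 * \sum_j K i j + \sum_j K i j * (x j 0 - x i 0).
  by rewrite mxE mulr_sumr -big_split /=; apply: eq_bigr => j _; ring.
have term_ge0 j : 0 <= K i j * (x j 0 - x i 0).
  have [->|ji] := eqVneq j i; first by rewrite subrr mulr0.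
  by apply: mulr_le0; [apply: K_offdiag; rewrite eq_sym | rewrite subr_le0].
have sum_ge0 : 0 <= \sum_j K i j * (x j 0 - x i 0) by apply: sumr_ge0.
have prod_ge0 : 0 <= x i 0 * \sum_j K i j by apply: mulr_ge0 => //; apply: ltW.
have prod_eq0 : x i 0 * \sum_j K i j = 0 by lra.
have sum_eq0 : \sum_j K i j * (x j 0 - x i 0) = 0 by lra.
split; first by move/eqP: prod_eq0; rewrite mulf_eq0 (gt_eqF xi_gt0) /= => /eqP.
move=> j Kij_lt0.
have := @psumr_eq0P _ _ predT _ (fun j _ => term_ge0 j) sum_eq0 j isT.
by move/eqP; rewrite mulf_eq0 (lt_eqF Kij_lt0) subr_eq0 => /eqP.
Qed.

Lemma Zmx_rowsum_gt0_unit : (forall i, 0 < \sum_j K i j) -> K \in unitmx.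
Proof.
move=> rowsum_gt0; apply: unitmx_of_kernel_max => x Kx i max_i xi_gt0.
have Kx_i : (K *m x) i 0 = 0 by rewrite Kx mxE.
have [rowsum_eq0 _] := Zmx_kernel_max max_i xi_gt0 Kx_i (ltW (rowsum_gt0 i)).
by move: (rowsum_gt0 i); rewrite rowsum_eq0 ltxx.
Qed.

(* A positive maximum of a kernel vector spreads along the edges a -> b with
   K_ab < 0 and reaches k, whose row sum must then vanish. *)
Lemma Zmx_connect_unit k :
  (forall i, 0 <= \sum_j K i j) -> 0 < \sum_j K k j ->
  (forall i, connect [rel a b | (a != b) && (K a b < 0)] i k) -> K \in unitmx.
Proof.
move=> rowsum_ge0 rowsum_k_gt0 reach_k.
apply: unitmx_of_kernel_max => x Kx i max_i xi_gt0.
have at_max y : x y 0 = x i 0 ->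
    \sum_j K y j = 0 /\ (forall j, K y j < 0 -> x j 0 = x y 0).
  move=> xy; apply: Zmx_kernel_max => //.
  - by move=> j; rewrite xy.
  - by rewrite xy.
  - by rewrite Kx mxE.
have max_along p y : path [rel a b | (a != b) && (K a b < 0)] y p ->
    x y 0 = x i 0 -> x (last y p) 0 = x i 0.
  elim: p y => [|z p IHp] y //= /andP [/andP [_ Kyz] path_z] xy.
  by apply: IHp path_z _; rewrite -xy; apply: (at_max y xy).2.
have [p path_p k_last] := connectP (reach_k i).
have xk_max : x k 0 = x i 0 by rewrite k_last; apply: max_along.
have [rowsum_k_eq0 _] := at_max k xk_max.
by move: rowsum_k_gt0; rewrite rowsum_k_eq0 ltxx.
Qed.

End ZMatrix.

Section Logistic.
Variables (R : realFieldType) (n : nat).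

Definition logistic_eq (M : 'M[R]_n) (beta : 'rV[R]_n) (p : 'cV[R]_n) :=
  forall i, (M *m p) i 0 = beta 0 i * p i 0 * (1 - p i 0).

Variables (M : 'M[R]_n) (beta : 'rV[R]_n).
Hypothesis M_offdiag : forall a b, a != b -> M a b <= 0.
Hypothesis beta_gt0 : forall i, 0 < beta 0 i.

Lemma logistic_eq_le (p q : 'cV[R]_n) : vpos p -> vpos q ->
  logistic_eq M beta p -> logistic_eq M beta q -> forall j, p j 0 <= q j 0.
Proof.
move=> p_gt0 q_gt0 Mp Mq j.
have [i max_i] := exists_argmax (fun j => p j 0 / q j 0) j.
set t := p i 0 / q i 0 in max_i.
have p_le_tq k : p k 0 <= t * q k 0 by have := max_i k; rewrite ler_pdivrMr.
have qi := q_gt0 i; have qj := q_gt0 j; have bi := beta_gt0 i.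
suff t_le1 : t <= 1 by have := p_le_tq j; nra.
rewrite leNgt; apply/negP => t_gt1.
have pi_eq : p i 0 = t * q i 0 by rewrite /t divfK // gt_eqF.
have diff_ge0 : 0 <= (M *m p) i 0 - t * (M *m q) i 0.
  have -> : (M *m p) i 0 - t * (M *m q) i 0 =
      \sum_k M i k * (p k 0 - t * q k 0).
    by rewrite !mxE mulr_sumr -sumrB; apply: eq_bigr => k _; ring.
  apply: sumr_ge0 => k _; have [->|ki] := eqVneq k i.
    by rewrite pi_eq subrr mulr0.
  by apply: mulr_le0; [apply: M_offdiag; rewrite eq_sym | rewrite subr_le0].
have diff_eq : (M *m p) i 0 - t * (M *m q) i 0 =
    - (beta 0 i * t * (q i 0 * q i 0) * (t - 1)) by rewrite Mp Mq pi_eq; ring.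
have : 0 < beta 0 i * t * (q i 0 * q i 0) * (t - 1).
  by rewrite !mulr_gt0 ?invr_gt0 ?subr_gt0.
by rewrite -oppr_lt0 -diff_eq ltNge diff_ge0.
Qed.

Lemma logistic_eq_uniq (p q : 'cV[R]_n) : vpos p -> vpos q ->
  logistic_eq M beta p -> logistic_eq M beta q -> p = q.
Proof.
move=> p_gt0 q_gt0 Mp Mq; apply/matrixP => i j; rewrite ord1.
by apply: le_anti; rewrite !logistic_eq_le.
Qed.

(* Multiplying H(p) = p by M (I + A diag(p)) = M + B diag(p) clears both
   inverses. *)
Lemma Hmap_fixed_logistic (p : 'cV[R]_n) :
  M \in unitmx -> (M + diag_mx beta *m diag_mx p^T) \in unitmx ->
  Hmap (invmx M *m diag_mx beta) p = p -> logistic_eq M beta p.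
Proof.
move=> M_unit MBp_unit fixed_p i.
pose N := 1%:M + invmx M *m diag_mx beta *m diag_mx p^T.
have MN : M *m N = M + diag_mx beta *m diag_mx p^T.
  by rewrite /N mulmxDr mulmx1 !mulmxA mulmxV // mul1mx.
have N_unit : N \in unitmx by move: MBp_unit; rewrite -MN unitmx_mul => /andP[].
have /(congr1 (mulmx M)) : N *m p = invmx M *m diag_mx beta *m p.
  by rewrite -{1}fixed_p /Hmap -/N mulKVmx.
rewrite !mulmxA MN mulmxV // mul1mx mulmxDl -mulmxA => /matrixP/(_ i 0).
rewrite mxE !mul_diag_mx !mxE => E.
by apply: (addIr (beta 0 i * (p i 0 * p i 0))); rewrite E; ring.
Qed.

End Logistic.

Section Lstar.
Variables (R : realFieldType) (n : nat) (Q : 'M[R]_n) (v : 'cV[R]_n).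
Hypothesis v_gt0 : vpos v.

Lemma Lstar_offdiag a b : a != b -> Lstar Q v a b = - (Q b a * v b 0 / v a 0).
Proof. by move=> ab; rewrite mxE (negbTE ab). Qed.

Lemma Lstar_rowsum i : \sum_j Lstar Q v i j = 0.
Proof.
rewrite (bigD1 i) //= mxE eqxx.
under eq_bigr => j ji do rewrite Lstar_offdiag 1?eq_sym //.
by rewrite sumrN addrN.
Qed.

Lemma Lstar_offdiag_lt0 a b : a != b -> (Lstar Q v a b < 0) = (0 < Q b a).
Proof.
move=> ab; rewrite Lstar_offdiag // oppr_lt0.
by rewrite pmulr_lgt0 ?invr_gt0 // pmulr_lgt0.
Qed.

Hypothesis Q_gen : generator_mx Q.

Lemma Lstar_offdiag_le0 a b : a != b -> Lstar Q v a b <= 0.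
Proof.
move=> ab; rewrite Lstar_offdiag // oppr_le0.
have Qba : 0 <= Q b a by apply: Q_gen.1; rewrite eq_sym.
by rewrite !mulr_ge0 ?invr_ge0 // ltW.
Qed.

Lemma Lstar_add_diag_offdiag_le0 (d : 'rV[R]_n) a b :
  a != b -> (Lstar Q v + diag_mx d) a b <= 0.
Proof. by move=> ab; rewrite add_diag_offdiag // Lstar_offdiag_le0. Qed.

Lemma Lstar_add_diag_rowsum (d : 'rV[R]_n) i :
  \sum_j (Lstar Q v + diag_mx d) i j = d 0 i.
Proof. by rewrite rowsum_add_diag Lstar_rowsum add0r. Qed.

Lemma Lstar_add_diag_pos_unit (d : 'rV[R]_n) :
  (forall i, 0 < d 0 i) -> Lstar Q v + diag_mx d \in unitmx.
Proof.
move=> d_gt0; apply: Zmx_rowsum_gt0_unit => [|i].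
  exact: Lstar_add_diag_offdiag_le0.
by rewrite Lstar_add_diag_rowsum.
Qed.

Lemma Lstar_add_diag_irreducible_unit (d : 'rV[R]_n) :
  irreducible_mx Q -> (forall i, 0 <= d 0 i) -> (exists i, 0 < d 0 i) ->
  Lstar Q v + diag_mx d \in unitmx.
Proof.
move=> Q_irr d_ge0 [k dk_gt0].
apply: (Zmx_connect_unit (Lstar_add_diag_offdiag_le0 d) (k := k)).
- by move=> i; rewrite Lstar_add_diag_rowsum.
- by rewrite Lstar_add_diag_rowsum.
move=> i; rewrite (@eq_connect _ _ [rel a b | (b != a) && (0 < Q b a)]).
  by rewrite (connect_rev [rel a b | (a != b) && (0 < Q a b)]) /= Q_irr.
move=> a b /=; have [->|ab] //= := eqVneq a b.
by rewrite add_diag_offdiag // Lstar_offdiag_lt0 // eq_sym.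
Qed.

End Lstar.

Theorem proposition2 (R : realFieldType) (n : nat) (hn : (2 <= n)%N)
  (Q : 'M[R]_n) (v : 'cV[R]_n) (beta delta : 'rV[R]_n) (pstar : 'cV[R]_n) :
  generator_mx Q -> irreducible_mx Q ->
  vpos v -> Q^T *m v = 0 -> \sum_(i < n) v i 0 = 1 ->
  (forall i, 0 < beta 0 i) ->
  (forall i, 0 <= delta 0 i) -> (exists i, 0 < delta 0 i) ->
  let A := invmx (Lstar Q v + diag_mx delta) *m diag_mx beta in
  vpos pstar -> Hmap A pstar = pstar ->
  forall p : 'cV[R]_n, vpos p -> Hmap A p = p -> p = pstar.
Proof.
move=> Q_gen Q_irr v_gt0 _ _ beta_gt0 delta_ge0 delta_pos A
  pstar_gt0 fixed_pstar p p_gt0 fixed_p.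
set M := Lstar Q v + diag_mx delta.
have M_unit : M \in unitmx by exact: Lstar_add_diag_irreducible_unit.
have fixed_logistic r : vpos r -> Hmap A r = r -> logistic_eq M beta r.
  move=> r_gt0; apply: Hmap_fixed_logistic => //.
  rewrite mulmx_diag -addrA -raddfD /=.
  apply: Lstar_add_diag_pos_unit => // i; rewrite !mxE.
  by rewrite ltr_wpDl ?mulr_gt0.
have M_offdiag a b : a != b -> M a b <= 0 by exact: Lstar_add_diag_offdiag_le0.
apply: (logistic_eq_uniq M_offdiag beta_gt0 p_gt0 pstar_gt0).
- exact: fixed_logistic.
- exact: fixed_logistic.
Qed.
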